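(* Let $\Pi$ be the set of graphs $G$ satisfying $\sum_{H:|V(H)|=4} w_H\cdot p(H,G)\le \frac{5}{16}$, where $w_{K_4}=1$, $w_{\bar{K_4}}=\frac12$, $w_{D_4}=\frac{5}{12}$, $w_{\bar{D_4}}=\frac{5}{12}$, $w_{P_3}=\frac13$, $w_{\bar{P_3}}=\frac16$, $w_{C_4}=\frac12$, $w_{\bar{C_4}}=\frac13$, $w_{K_{1,3}}=\frac14$, $w_{\bar{K_{1,3}}}=\frac14$, $w_{P_4}=\frac14$. Let $n\ge4$ and let $G\sim G(n,1/2)$. Then $G\in\Pi$ with probability at least $\frac{1}{2n^4}$.
   Context: $K_4$ is the complete graph on 4 vertices, $D_4$ is $K_4$ minus an edge, $P_3$ is the 4-vertex graph consisting of a path on 3 vertices plus an isolated vertex, $C_4$ the 4-cycle, $P_4$ the path on 4 vertices, $K_{1,3}$ the star on 4 vertices, and $\bar H$ the complement of $H$. $p(H,G)$ is the fraction of induced subgraphs of $G$ on $|V(H)|$ vertices isomorphic to $H$. $G(n,1/2)$ is the uniformly random graph on $n$ labeled vertices (each pair an edge independently with probability $1/2$). *)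

From mathcomp Require Import all_boot all_order all_algebra.
Set Implicit Arguments. Unset Strict Implicit. Unset Printing Implicit Defensive.
Import Order.TTheory GRing.Theory Num.Theory.
Local Open Scope ring_scope.

(* A labeled simple graph on vertex set 'I_n is its edge set: a set of
   2-element subsets of 'I_n. *)
Definition two_sets (n : nat) : {set {set 'I_n}} := [set A : {set 'I_n} | #|A| == 2%N].
Definition is_graph (n : nat) (E : {set {set 'I_n}}) : bool := E \subset two_sets n.
Definition adj (n : nat) (E : {set {set 'I_n}}) (x y : 'I_n) : bool := [set x; y] \in E.

Definition edges_of (l : seq (nat * nat)) : rel 'I_4 :=
  fun i j => ((val i, val j) \in l) || ((val j, val i) \in l).
Definition gcompl (h : rel 'I_4) : rel 'I_4 := fun i j => (i != j) && ~~ h i j.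

Definition K4   : rel 'I_4 := edges_of [:: (0,1); (0,2); (0,3); (1,2); (1,3); (2,3)]%N.
Definition D4   : rel 'I_4 := edges_of [:: (0,2); (0,3); (1,2); (1,3); (2,3)]%N. (* K4 minus edge 01 *)
Definition P3   : rel 'I_4 := edges_of [:: (0,1); (1,2)]%N.         (* path 0-1-2, vertex 3 isolated *)
Definition C4   : rel 'I_4 := edges_of [:: (0,1); (1,2); (2,3); (3,0)]%N.
Definition P4   : rel 'I_4 := edges_of [:: (0,1); (1,2); (2,3)]%N.
Definition K13  : rel 'I_4 := edges_of [:: (0,1); (0,2); (0,3)]%N.

Definition ind_iso (n : nat) (E : {set {set 'I_n}}) (S : {set 'I_n}) (h : rel 'I_4) : bool :=
  [exists f : {ffun 'I_4 -> 'I_n},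
    [&& injectiveb f, (f @: setT == S) &
        [forall i, forall j, h i j == adj E (f i) (f j)]]].

Definition pdens (n : nat) (h : rel 'I_4) (E : {set {set 'I_n}}) : rat :=
  (#|[set S : {set 'I_n} | (#|S| == 4%N) && ind_iso E S h]|)%:R / ('C(n, 4))%:R.

Definition weighted_sum (n : nat) (E : {set {set 'I_n}}) : rat :=
    1 * pdens K4 E + (1/2) * pdens (gcompl K4) E
  + (5/12) * pdens D4 E + (5/12) * pdens (gcompl D4) E
  + (1/3) * pdens P3 E + (1/6) * pdens (gcompl P3) E
  + (1/2) * pdens C4 E + (1/3) * pdens (gcompl C4) E
  + (1/4) * pdens K13 E + (1/4) * pdens (gcompl K13) E
  + (1/4) * pdens P4 E.

Definition inPi (n : nat) (E : {set {set 'I_n}}) : bool := weighted_sum E <= 5/16.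

(* Probability under G(n,1/2): uniform over all labeled graphs on 'I_n. *)
Definition prob_Gn (n : nat) (P : {set {set 'I_n}} -> bool) : rat :=
  (#|[set E : {set {set 'I_n}} | is_graph E && P E]|)%:R /
  (#|[set E : {set {set 'I_n}} | is_graph E]|)%:R.

(* For every 4-set S of vertices, the graph that G(n,1/2) induces on S is
   uniformly distributed over the 64 labelled graphs on S: toggling the pairs
   inside S is a measure-preserving involution between any two patterns.  Hence
   the expected weighted density is (1/64) * sum_H w_H * #(labelled copies of H)
   = 20/64 = 5/16.  The weighted density is a multiple of d = 1/(48 C(n,4)), so
   a graph outside Pi exceeds the mean by at least d; since the weighted density
   is nonnegative, averaging gives P(G in Pi) >= d/(5/16 + d) >= d >= 1/(2n^4). *)

From mathcomp Require Import all_boot all_order all_algebra.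
From mathcomp Require Import ring lra.
Set Implicit Arguments. Unset Strict Implicit. Unset Printing Implicit Defensive.
Import Order.TTheory GRing.Theory Num.Theory.
Local Open Scope ring_scope.

Lemma mean_gap_frac_le (R : realFieldType) (T : finType) (A : {set T})
    (f : T -> R) (a d : R) :
  (0 < #|A|)%N -> a + d <= 1 ->
  {in A, forall x, 0 <= f x} ->
  {in A, forall x, a < f x -> a + d <= f x} ->
  \sum_(x in A) f x = #|A|%:R * a ->
  d <= #|[set x in A | f x <= a]|%:R / #|A|%:R.
Proof.
move=> A_gt0 ad_le1 f_ge0 f_gap f_mean.
have pointwise x : x \in A -> d - (a + d) * (f x <= a)%R%:R <= f x - a.
  move=> xA; have := f_ge0 x xA.
  by case: (lerP (f x) a) => [|/(f_gap x xA)] ? ?; rewrite ?mulr1 ?mulr0; lra.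
have cardE : \sum_(x in A) (f x <= a)%R%:R = #|[set x in A | f x <= a]|%:R :> R.
  rewrite -sumr_const big_mkcond [RHS]big_mkcond; apply: eq_bigr => x _.
  by rewrite inE; case: (x \in A); case: (f x <= a).
have : \sum_(x in A) (d - (a + d) * (f x <= a)%R%:R) <= \sum_(x in A) (f x - a).
  exact: ler_sum.
rewrite !sumrB -mulr_sumr f_mean cardE !sumr_const ler_pdivlMr ?ltr0n //.
rewrite -[d *+ _]mulr_natr -[a *+ _]mulr_natl => key.
have p_ge0 : 0 <= #|[set x in A | f x <= a]|%:R :> R := ler0n _ _.
nra.
Qed.

Lemma ler_inv_nat (R : numFieldType) (m k : nat) :
  (0 < m)%N -> (m <= k)%N -> 1 / k%:R <= 1 / m%:R :> R.
Proof.
move=> m_gt0 le_mk; have k_gt0 := leq_trans m_gt0 le_mk.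
by rewrite !div1r lef_pV2 ?posrE ?ltr0n // ler_nat.
Qed.

Lemma nat_frac_gap (R : numFieldType) (D k m : nat) : (0 < D)%N ->
  k%:R / D%:R < m%:R / D%:R :> R -> k%:R / D%:R + 1 / D%:R <= m%:R / D%:R :> R.
Proof.
move=> D_gt0; have D_pos : 0 < D%:R :> R by rewrite ltr0n.
by rewrite -mulrDl natr1 ltr_pM2r ?invr_gt0 // ler_pM2r ?invr_gt0 // ltr_nat ler_nat.
Qed.

Lemma ffact_le_expn n m : (n ^_ m <= n ^ m)%N.
Proof. by elim: m => // m IHm; rewrite ffactnSr expnSr leq_mul ?leq_subr. Qed.

Lemma leq_binom4_expn n : (48 * 'C(n, 4) <= 2 * n ^ 4)%N.
Proof.
rewrite (_ : 48 = 2 * 4`!)%N // -mulnA [(4`! * _)%N]mulnC bin_ffact.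
exact: leq_mul (leqnn 2) (ffact_le_expn n 4).
Qed.

Fixpoint bitseqs (k : nat) : seq bitseq :=
  if k is k'.+1 then [seq b :: s | b <- [:: true; false], s <- bitseqs k']
  else [:: [::]].

Lemma mem_bitseqs k s : (s \in bitseqs k) = (size s == k).
Proof.
elim: k s => [|k IHk] [|b s] //.
  by apply/negbTE/allpairsP => -[[? ?] [_ _]].
rewrite [size _]/= eqSS -IHk; apply/allpairsP/idP => [[[b' s'] [_ ? [_ ->]]] // | sk].
by exists (b, s); rewrite sk; case: b.
Qed.

Lemma bitseqs_uniq k : uniq (bitseqs k).
Proof.
by elim: k => // k IHk; apply: allpairs_uniq => // -[b s] [b' s'] _ _ [-> ->].
Qed.

Lemma size_bitseqs k : size (bitseqs k) = (2 ^ k)%N.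
Proof. by elim: k => // k IHk; rewrite [LHS]size_allpairs IHk expnS. Qed.

Section SymmetricDifference.
Variable T : finType.
Implicit Types A B U : {set T}.

Definition symdiff A B : {set T} := (A :\: B) :|: (B :\: A).

Lemma in_symdiff A B x : (x \in symdiff A B) = (x \in A) (+) (x \in B).
Proof. by rewrite !inE; case: (x \in A); case: (x \in B). Qed.

Lemma symdiffK B : involutive (symdiff^~ B).
Proof. by move=> A; apply/setP => x; rewrite !in_symdiff -addbA addbb addbF. Qed.

Lemma symdiff_sub U A B : A \subset U -> B \subset U -> symdiff A B \subset U.
Proof. by move=> sAU sBU; rewrite subUset !(subset_trans (subsetDl _ _)). Qed.

End SymmetricDifference.

Section Trace.
Variables (T : finType) (U : {set T}) (t : seq T).
Hypotheses (t_uniq : uniq t) (t_sub : {subset t <= U}).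

Definition trace (E : {set T}) : bitseq := [seq x \in E | x <- t].

Definition trace_fiber (b : bitseq) : {set {set T}} :=
  [set E : {set T} | (E \subset U) && (trace E == b)].

Definition trace_diff (b b' : bitseq) : {set T} :=
  [set x in t | nth false b (index x t) != nth false b' (index x t)].

Lemma nth_trace E x : x \in t -> nth false (trace E) (index x t) = (x \in E).
Proof. by move=> tx; rewrite (nth_map x) ?index_mem ?nth_index. Qed.

Lemma trace_symdiff_diff E b' : size b' = size t ->
  trace (symdiff E (trace_diff (trace E) b')) = b'.
Proof.
move=> sb'; apply: (@eq_from_nth _ false); rewrite size_map ?sb' // => k kt.
have /hasP[x0 _ _] : has predT t by rewrite has_predT (leq_ltn_trans _ kt).
set x := nth x0 t k; have tx : x \in t by rewrite mem_nth.
have -> : k = index x t by rewrite index_uniq.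
by rewrite nth_trace // in_symdiff inE tx nth_trace //; case: (x \in E); case: nth.
Qed.

Lemma card_trace_fiber_le b b' : size b' = size t ->
  (#|trace_fiber b| <= #|trace_fiber b'|)%N.
Proof.
move=> sb'; rewrite -(card_imset _ (can_inj (symdiffK (trace_diff b b')))).
apply/subset_leq_card/subsetP => _ /imsetP[E + ->]; rewrite !inE => /andP[sEU /eqP <-].
rewrite symdiff_sub //= ?trace_symdiff_diff //.
by apply/subsetP => x; rewrite inE => /andP[/t_sub].
Qed.

Lemma card_trace_fiber b b' : size b = size t -> size b' = size t ->
  #|trace_fiber b| = #|trace_fiber b'|.
Proof. by move=> sb sb'; apply/eqP; rewrite eqn_leq !card_trace_fiber_le. Qed.

Lemma sum_subset_trace_fibers (V : nmodType) (F : bitseq -> V) :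
  \sum_(E : {set T} | E \subset U) F (trace E)
    = \sum_(b <- bitseqs (size t)) F b *+ #|trace_fiber b|.
Proof.
transitivity (\sum_(E : {set T} | E \subset U) \sum_(b <- bitseqs (size t))
                (if trace E == b then F b else 0)).
  apply: eq_bigr => E _; rewrite (bigD1_seq (trace E)) ?bitseqs_uniq //=.
    by rewrite eqxx big1 ?addr0 // => b /negPf; rewrite eq_sym => ->.
  by rewrite mem_bitseqs size_map.
rewrite exchange_big; apply: eq_bigr => b _.
rewrite -big_mkcondr sumr_const; congr (_ *+ _).
by apply: eq_card => E; rewrite inE.
Qed.

Lemma card_trace_fiberE b : size b = size t ->
  (#|trace_fiber b| * 2 ^ size t)%N = #|powerset U|.
Proof.
move=> sb; have := sum_subset_trace_fibers (fun=> 1%N).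
rewrite (eq_bigl (fun E => E \in powerset U)) => [|E]; last by rewrite powersetE.
rewrite sum1_card => ->.
rewrite (eq_big_seq (fun=> #|trace_fiber b|)) => [|b']; last first.
  by rewrite mem_bitseqs => /eqP sb'; rewrite natn (card_trace_fiber sb' sb).
by rewrite big_const_seq count_predT iter_addn_0 size_bitseqs.
Qed.

Lemma sum_subset_traceE (R : numFieldType) (F : bitseq -> R) :
  \sum_(E : {set T} | E \subset U) F (trace E)
    = #|powerset U|%:R / (2 ^ size t)%:R * \sum_(b <- bitseqs (size t)) F b.
Proof.
rewrite sum_subset_trace_fibers mulr_sumr; apply: eq_big_seq => b.
rewrite mem_bitseqs => /eqP sb; rewrite -(card_trace_fiberE sb) natrM.
by rewrite mulfK ?mulr_natl // pnatr_eq0 expn_eq0.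
Qed.

End Trace.

(* Explicit ordinals: [enum 'I_4] does not reduce under [vm_compute]. *)
Definition ord4 : seq 'I_4 :=
  [:: @Ordinal 4 0 isT; @Ordinal 4 1 isT; @Ordinal 4 2 isT; @Ordinal 4 3 isT].

Lemma mem_ord4 (i : 'I_4) : i \in ord4.
Proof. by case: i => -[|[|[|[|//]]]] lti; rewrite !inE -!val_eqE. Qed.

Lemma nth_ord4 (i : 'I_4) : nth ord0 ord4 i = i.
Proof. by apply: val_inj; case: i => -[|[|[|[|//]]]]. Qed.

Lemma forall_ord4 (P : pred 'I_4) : [forall i, P i] = all P ord4.
Proof. by apply/forallP/allP => [P_all i _ | P_ord4 i]; rewrite ?P_ord4 ?mem_ord4. Qed.

Lemma exists_inj_ord4 (P : ('I_4 -> 'I_4) -> bool) :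
    (forall f f', f =1 f' -> P f = P f') ->
  [exists f : {ffun 'I_4 -> 'I_4}, injectiveb f && P f]
    = has (fun s => P (nth ord0 s)) (permutations ord4).
Proof.
move=> P_ext; apply/existsP/hasP => [[f /andP[/injectiveP f_inj Pf]] | [s]].
  exists (map f ord4).
    have f_uniq : uniq (map f ord4) by rewrite map_inj_uniq.
    rewrite mem_permutations uniq_perm //.
    by have [] := uniq_min_size f_uniq (fun i _ => mem_ord4 i) (leqnn 4).
  by rewrite (P_ext _ f) // => i; rewrite (nth_map ord0) // nth_ord4.
rewrite mem_permutations => s_perm Ps.
have s_uniq : uniq s by rewrite (perm_uniq s_perm).
exists [ffun i : 'I_4 => nth ord0 s i]; apply/andP; split.
  apply/injectiveP => i j; rewrite !ffunE => /eqP.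
  by rewrite nth_uniq ?(perm_size s_perm) // => /eqP /val_inj.
by rewrite (P_ext _ (nth ord0 s)) // => i; rewrite ffunE.
Qed.

Definition pairs4 : seq ('I_4 * 'I_4) :=
  [seq (i, j) | i : 'I_4 <- ord4, j : 'I_4 <- [seq j : 'I_4 <- ord4 | (i < j)%N]].

Definition pair_index (i j : 'I_4) : nat :=
  if (i < j)%N then index (i, j) pairs4 else index (j, i) pairs4.

(* [pair_index i i] is [size pairs4], so [adj_code b i i] is [false]. *)
Definition adj_code (b : bitseq) (i j : 'I_4) : bool := nth false b (pair_index i j).

Definition iso_code (h : rel 'I_4) (b : bitseq) : bool :=
  has (fun s => all (fun i => all (fun j =>
         h i j == adj_code b (nth ord0 s i) (nth ord0 s j)) ord4) ord4)
    (permutations ord4).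

Lemma mem_pairs4 (i j : 'I_4) : (i < j)%N -> (i, j) \in pairs4.
Proof. by move=> lt_ij; apply: allpairs_f_dep; rewrite ?mem_filter ?lt_ij mem_ord4. Qed.

Lemma pairs4_lt p : p \in pairs4 -> (p.1 < p.2)%N.
Proof. by case/allpairsPdep => i [j [_ + ->]]; rewrite mem_filter => /andP[]. Qed.

Section InducedCode.
Variables (n : nat) (g : 'I_4 -> 'I_n).
Hypothesis g_inj : injective g.

Definition edge_slots : seq {set 'I_n} := [seq [set g p.1; g p.2] | p <- pairs4].

Definition induced_code (E : {set {set 'I_n}}) : bitseq := trace edge_slots E.

Lemma edge_slots_uniq : uniq edge_slots.
Proof.
(* A slot is determined by which of the [g i] it contains. *)
apply: (@map_uniq _ _ (fun S : {set 'I_n} => [seq g i \in S | i <- ord4]) edge_slots).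
rewrite -map_comp (@eq_map _ _ _ (fun p => [seq (i == p.1) || (i == p.2) | i <- ord4])).
  by vm_compute.
by move=> p; apply: eq_map => i; rewrite /= in_set2 !(inj_eq g_inj).
Qed.

Lemma edge_slots_sub : {subset edge_slots <= two_sets n}.
Proof.
move=> _ /mapP[p /pairs4_lt lt_p ->].
by rewrite inE cards2 (inj_eq g_inj) neq_ltn lt_p.
Qed.

Lemma adj_induced_code E i j :
  is_graph E -> adj E (g i) (g j) = adj_code (induced_code E) i j.
Proof.
move=> /subsetP E_graph.
have nth_code p : p \in pairs4 ->
    nth false (induced_code E) (index p pairs4) = ([set g p.1; g p.2] \in E).
  by move=> p4; rewrite /induced_code /trace -map_comp (nth_map p) ?index_mem ?nth_index.
rewrite /adj_code /pair_index /adj.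
case: (ltngtP i j) => [lt_ij | lt_ji | /val_inj <-].
- by rewrite nth_code ?mem_pairs4.
- by rewrite nth_code ?mem_pairs4 // setUC.
have ii_notin : (i, i) \notin pairs4 by apply/negP => /pairs4_lt; rewrite ltnn.
rewrite nth_default ?size_map ?memNindex // setUid.
by apply/negP => /E_graph; rewrite inE cards1.
Qed.

Lemma ind_iso_imset E h :
  ind_iso E (g @: setT) h = [exists s : {ffun 'I_4 -> 'I_4},
    injectiveb s && [forall i, forall j, h i j == adj E (g (s i)) (g (s j))]].
Proof.
apply/existsP/existsP => [[f /and3P[/injectiveP f_inj /eqP f_im f_iso]] | [s]].
  have /all_sig[s gs] i : {k | g k = f i}.
    apply: sig_eqW; have : f i \in g @: setT by rewrite -f_im imset_f.
    by case/imsetP => k _ ->; exists k.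
  exists [ffun i => s i]; apply/andP; split.
    by apply/injectiveP => i j; rewrite !ffunE => /(congr1 g); rewrite !gs => /f_inj.
  by apply: etrans f_iso; apply: eq_forallb => i; apply: eq_forallb => j; rewrite !ffunE !gs.
case/andP=> /injectiveP s_inj s_iso; exists [ffun i => g (s i)]; apply/and3P; split.
- by apply/injectiveP => i j; rewrite !ffunE => /g_inj /s_inj.
- apply/eqP/setP => x; apply/imsetP/imsetP => -[i _ ->].
    by exists (s i); rewrite ?ffunE.
  by exists (invF s_inj i); rewrite ?ffunE ?f_invF.
- by apply: etrans s_iso; apply: eq_forallb => i; apply: eq_forallb => j; rewrite !ffunE.
Qed.

Lemma ind_iso_induced_code E h :
  is_graph E -> ind_iso E (g @: setT) h = iso_code h (induced_code E).
Proof.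
move=> E_graph; rewrite ind_iso_imset (@exists_inj_ord4 (fun f =>
  [forall i, forall j, h i j == adj E (g (f i)) (g (f j))])) => [|f f' eq_f]; last first.
  by apply: eq_forallb => i; apply: eq_forallb => j; rewrite !eq_f.
apply: eq_has => s; rewrite forall_ord4; apply: eq_all => i.
by rewrite forall_ord4; apply: eq_all => j; rewrite adj_induced_code.
Qed.

End InducedCode.

Definition labelled_copies (h : rel 'I_4) : nat := count (iso_code h) (bitseqs 6).

Definition graphs n : {set {set {set 'I_n}}} := [set E | is_graph E].

Lemma sum_graphs_induced_code (R : numFieldType) n (g : 'I_4 -> 'I_n) (F : bitseq -> R) :
    injective g ->
  \sum_(E in graphs n) F (induced_code g E)
    = #|graphs n|%:R / 64 * \sum_(b <- bitseqs 6) F b.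
Proof.
move=> g_inj.
rewrite (eq_bigl (fun E : {set {set 'I_n}} => E \subset two_sets n)) => [|E]; last first.
  by rewrite inE.
rewrite sum_subset_traceE; [|exact: edge_slots_uniq|exact: edge_slots_sub].
by congr (_ / _ * _); apply: eq_card => E; rewrite inE powersetE.
Qed.

Lemma set_ord_param (T : finType) (S : {set T}) k :
  #|S| = k -> exists2 g : 'I_k -> T, injective g & g @: setT = S.
Proof.
move=> cardS; exists (fun i => enum_val (cast_ord (esym cardS) i)).
  by move=> i j /enum_val_inj /cast_ord_inj.
apply/setP => x; apply/imsetP/idP => [[i _ ->] | Sx]; first exact: enum_valP.
by exists (cast_ord cardS (enum_rank_in Sx x)); rewrite ?cast_ordK ?enum_rankK_in.
Qed.

Lemma sum_pdens n h : (4 <= n)%N ->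
  \sum_(E in graphs n) pdens h E
    = #|graphs n|%:R / 64 * (labelled_copies h)%:R.
Proof.
move=> n_ge4; have C_neq0 : 'C(n, 4)%:R != 0 :> rat by rewrite pnatr_eq0 -lt0n bin_gt0.
have pdensE E : pdens h E
    = (\sum_(S : {set 'I_n} | #|S| == 4%N) (ind_iso E S h)%:R) / 'C(n, 4)%:R.
  rewrite /pdens -sumr_const big_mkcond [in RHS]big_mkcond; congr (_ / _).
  by apply: eq_bigr => S _; rewrite inE; case: (#|S| == 4%N); case: ind_iso.
have card_4sets : #|[pred S : {set 'I_n} | #|S| == 4%N]| = 'C(n, 4).
  by rewrite -[n in RHS]card_ord -card_draws; apply: eq_card => S; rewrite !inE.
rewrite (eq_bigr _ (fun E _ => pdensE E)) -mulr_suml exchange_big.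
rewrite (eq_bigr (fun=> #|graphs n|%:R / 64 * (labelled_copies h)%:R)).
  by rewrite sumr_const card_4sets -[_ *+ 'C(n, 4)]mulr_natr mulfK.
move=> S /eqP /set_ord_param[g g_inj <-].
rewrite (eq_bigr (fun E => (iso_code h (induced_code g E))%:R)) => [|E]; last first.
  by rewrite inE => E_graph; rewrite ind_iso_induced_code.
rewrite (sum_graphs_induced_code (fun b => (iso_code h b)%:R) g_inj).
rewrite /labelled_copies -sum1_count natr_sum; congr (_ * _).
by rewrite [RHS]big_mkcond; apply: eq_bigr => b _; case: iso_code.
Qed.

(* The weights of [weighted_sum], scaled by their common denominator 48. *)
Definition weighted_patterns : seq (nat * rel 'I_4) :=
  [:: (48, K4); (24, gcompl K4); (20, D4); (20, gcompl D4); (16, P3); (8, gcompl P3);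
      (24, C4); (16, gcompl C4); (12, K13); (12, gcompl K13); (12, P4)]%N.

Lemma weighted_sumE n (E : {set {set 'I_n}}) :
  weighted_sum E = \sum_(p <- weighted_patterns) (p.1%:R / 48 * pdens p.2 E : rat).
Proof.
(* Abstracting the densities keeps [lra] from unfolding them. *)
pose F h := pdens h E; rewrite /weighted_sum !big_cons big_nil /= -!/(F _).
by clearbody F; lra.
Qed.

Lemma weighted_labelled_copies :
  (\sum_(p <- weighted_patterns) p.1 * labelled_copies p.2)%N = 960%N.
Proof. by rewrite unlock; vm_compute. Qed.

Lemma sum_weighted_sum n : (4 <= n)%N ->
  \sum_(E in graphs n) weighted_sum E = #|graphs n|%:R * (5 / 16).
Proof.
move=> n_ge4; rewrite (eq_bigr _ (fun E _ => weighted_sumE E)).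
(* [exchange_big] cannot be used: its index universe is too small for [rel 'I_4]. *)
have -> : \sum_(E in graphs n) \sum_(p <- weighted_patterns) (p.1%:R / 48 * pdens p.2 E : rat)
    = \sum_(p <- weighted_patterns) p.1%:R / 48 * \sum_(E in graphs n) pdens p.2 E.
  elim: weighted_patterns => [|p s IH]; first by rewrite big_nil big1 // => E _; rewrite big_nil.
  by rewrite big_cons -IH mulr_sumr -big_split; apply: eq_bigr => E _; rewrite big_cons.
rewrite (eq_bigr (fun p => #|graphs n|%:R / 3072 * (p.1 * labelled_copies p.2)%N%:R)).
  by rewrite -mulr_sumr -natr_sum weighted_labelled_copies; lra.
by move=> p _; rewrite sum_pdens // natrM; field.
Qed.

Lemma weighted_sum_ge0 n (E : {set {set 'I_n}}) : 0 <= weighted_sum E.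
Proof.
rewrite weighted_sumE; apply: sumr_ge0 => p _.
by apply: mulr_ge0; apply: divr_ge0.
Qed.

Lemma weighted_sum_numer n (E : {set {set 'I_n}}) : (4 <= n)%N ->
  exists m : nat, weighted_sum E = m%:R / (48 * 'C(n, 4))%:R.
Proof.
move=> n_ge4; have C_neq0 : 'C(n, 4)%:R != 0 :> rat by rewrite pnatr_eq0 -lt0n bin_gt0.
have [k pdensE] : exists k : rel 'I_4 -> nat,
    forall h, pdens h E = (k h)%:R / 'C(n, 4)%:R by eexists => h.
exists (\sum_(p <- weighted_patterns) p.1 * k p.2)%N.
rewrite weighted_sumE natr_sum mulr_suml; apply: eq_bigr => p _.
by rewrite pdensE !natrM; field.
Qed.

Lemma weighted_sum_gap n (E : {set {set 'I_n}}) : (4 <= n)%N ->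
  5 / 16 < weighted_sum E -> 5 / 16 + 1 / (48 * 'C(n, 4))%:R <= weighted_sum E.
Proof.
move=> n_ge4; have C_gt0 : (0 < 'C(n, 4))%N by rewrite bin_gt0.
have [m ->] := weighted_sum_numer E n_ge4.
have -> : 5 / 16 = (15 * 'C(n, 4))%:R / (48 * 'C(n, 4))%:R :> rat.
  by rewrite !natrM; field; rewrite pnatr_eq0 -lt0n.
by apply: nat_frac_gap; rewrite muln_gt0.
Qed.

Theorem lemma2p5 (n : nat) (hn : (4 <= n)%N) :
  1 / (2 * (n ^ 4)%N)%:R <= prob_Gn (@inPi n).
Proof.
have C_gt0 : (0 < 'C(n, 4))%N by rewrite bin_gt0.
have D_gt0 : (0 < 48 * 'C(n, 4))%N by rewrite muln_gt0 C_gt0.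
have N_gt0 : (0 < #|graphs n|)%N.
  by apply/card_gt0P; exists set0; rewrite inE /is_graph sub0set.
have -> : prob_Gn (@inPi n)
    = #|[set E in graphs n | weighted_sum E <= 5 / 16]|%:R / #|graphs n|%:R.
  by congr (_%:R / _%:R); apply: eq_card => E; rewrite !inE.
apply: le_trans (ler_inv_nat rat D_gt0 (leq_binom4_expn n)) _.
apply: mean_gap_frac_le N_gt0 _ (fun E _ => weighted_sum_ge0 E)
  (fun E _ => weighted_sum_gap hn) (sum_weighted_sum hn).
have := ler_inv_nat rat (isT : (0 < 48)%N) (leq_pmulr 48 C_gt0).
lra.
Qed.
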